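(* Let $G$ be a finite group. Then $G/[\delta_i,G]$ is a nested group for every integer $i\ge 1$. Moreover, $G$ is nested if and only if $\delta_\infty=1$.
   Context: All groups are finite. For $\chi\in\mathrm{Irr}(G)$, the center of $\chi$ is $Z(\chi)=\{g\in G : |\chi(g)|=\chi(1)\}$. A group is nested if for any two of its irreducible characters $\chi,\psi$ either $Z(\chi)\le Z(\psi)$ or $Z(\psi)\le Z(\chi)$. For a normal subgroup $N$ of $G$, $\mathrm{Irr}(G\mid N)$ denotes the set of $\chi\in\mathrm{Irr}(G)$ with $N\not\le\ker(\chi)$. Define $\delta_1=G$ and $\delta_{i+1}=\prod_{\chi\in\mathrm{Irr}(G\mid[\delta_i,G])}Z(\chi)$ for $i\ge 1$, with the convention that an empty product is the trivial subgroup. This is a descending chain of normal subgroups which stabilizes; $\delta_\infty$ denotes its terminal term. *)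

From mathcomp Require Import all_boot all_order all_algebra all_fingroup all_solvable all_field all_character.
Set Implicit Arguments. Unset Strict Implicit. Unset Printing Implicit Defensive.
Import GRing.Theory Num.Theory.
Local Open Scope ring_scope.
Local Open Scope group_scope.

(* Z(chi) for chi irreducible is the library's cfcenter 'Z(chi)%CF,
   which for a character chi equals [set g in G | `|chi g| == chi 1]. *)

Definition nested (gT : finGroupType) (G : {group gT}) : Prop :=
  forall i j : Iirr G,
    ('Z('chi_i)%CF \subset 'Z('chi_j)%CF) \/ ('Z('chi_j)%CF \subset 'Z('chi_i)%CF).

(* delta_chain G n is delta_{n+1} of the paper (so delta_chain G 0 = G).
   delta_{i+1} = product of Z(chi) over chi in Irr(G | [delta_i, G]),
   realized as the subgroup generated by their union (the Z(chi) are normal),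
   which is trivial when the index set is empty. *)
Fixpoint delta_chain (gT : finGroupType) (G : {group gT}) (n : nat) : {set gT} :=
  match n with
  | 0 => G
  | n'.+1 =>
      <<\bigcup_(i : Iirr G | ~~ ([~: delta_chain G n', G]%g \subset cfker 'chi_i))
           'Z('chi_i)%CF>>
  end.

From mathcomp Require Import all_boot all_order all_algebra all_fingroup all_solvable all_field all_character.
Set Implicit Arguments. Unset Strict Implicit. Unset Printing Implicit Defensive.
Local Open Scope ring_scope.
Local Open Scope group_scope.

(* Since Z(chi)/ker chi = Z(G/ker chi) for irreducible chi, a subgroup A of G
   lies in Z(chi) iff [A, G] <= ker chi.  Hence if [delta_n, G] <= ker chi,
   then Z(chi) is one of the delta_j, and the delta_j form a descending chain:
   the characters of G/[delta_n, G] have nested centers.  Conversely, in a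
   nested group the product defining delta_(m+1) is the largest center Z(chi)
   occurring in it; once the chain stabilises, delta_(m+1) = Z(chi) would force
   [delta_m, G] <= ker chi, so no such chi exists and delta_(m+1) = 1. *)

Section IrrCenter.

Variables (gT : finGroupType) (G : {group gT}).

Lemma sub_cfcenter_irrE (A : {set gT}) (i : Iirr G) : A \subset G ->
  (A \subset 'Z('chi_i)%CF) = ([~: A, G] \subset cfker 'chi_i).
Proof.
move=> sAG; have nKG := normal_norm (cfker_normal 'chi_i).
have nKA := subset_trans sAG nKG.
rewrite -(quotientSGK nKA (normal_sub (cfker_center_normal _))).
by rewrite cfcenter_eq_center subsetI quotientS //= quotient_cents2.
Qed.

Lemma commg_cfcenter_irr (i : Iirr G) : [~: 'Z('chi_i)%CF, G] \subset cfker 'chi_i.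
Proof. by rewrite -sub_cfcenter_irrE ?cfcenter_sub. Qed.

Lemma quotient_cfcenter_mod_Iirr (N : {group gT}) (j : Iirr (G / N)) : N <| G ->
  'Z('chi_(mod_Iirr j))%CF / N = 'Z('chi_j)%CF.
Proof.
move=> nsNG.
have cfcenter_modE x : x \in G ->
    (coset N x \in 'Z('chi_j)%CF) = (x \in 'Z('chi_(mod_Iirr j))%CF).
  move=> Gx; have GNx : coset N x \in G / N := mem_quotient N Gx.
  by rewrite (irr_cfcenterE j GNx) irr_cfcenterE // mod_IirrE // cfModE // cfMod1.
apply/eqP; rewrite eqEsubset; apply/andP; split; apply/subsetP=> y.
  case/morphimP=> x _ Zx ->; rewrite cfcenter_modE //.
  exact: subsetP (cfcenter_sub _) x Zx.
move=> Zy; have /morphimP[x _ Gx def_y] := subsetP (cfcenter_sub _) y Zy.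
by move: Zy; rewrite def_y cfcenter_modE // => Zx; apply: mem_quotient.
Qed.

Lemma nested_quotient (N : {group gT}) : N <| G ->
    (forall i j : Iirr G, N \subset cfker 'chi_i -> N \subset cfker 'chi_j ->
      ('Z('chi_i)%CF \subset 'Z('chi_j)%CF) \/ ('Z('chi_j)%CF \subset 'Z('chi_i)%CF)) ->
  nested (G / N)%G.
Proof.
move=> nsNG chainG j1 j2.
have kerN (j : Iirr (G / N)) : N \subset cfker 'chi_(mod_Iirr j).
  by rewrite mod_IirrE ?cfker_mod.
rewrite -(quotient_cfcenter_mod_Iirr j1 nsNG) -(quotient_cfcenter_mod_Iirr j2 nsNG).
by case: (chainG _ _ (kerN j1) (kerN j2)) => sZ; [left | right]; apply: quotientS.
Qed.

Lemma nested_bigcup_cfcenter (P : pred (Iirr G)) (i0 : Iirr G) :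
    nested G -> P i0 ->
  exists2 i, P i & \bigcup_(k | P k) 'Z('chi_k)%CF \subset 'Z('chi_i)%CF.
Proof.
move=> nestedG Pi0.
have [i Pi maxZi] := arg_maxnP (fun k => #|'Z('chi_k)%CF|) Pi0.
exists i => //; apply/bigcupsP=> k Pk.
have [// | sZik] := nestedG k i.
have /eqP <- // : 'Z('chi_i)%CF == 'Z('chi_k)%CF.
by rewrite eqEcard sZik; apply: maxZi.
Qed.

End IrrCenter.

Section DeltaChain.

Variables (gT : finGroupType) (G : {group gT}).

Local Notation delta := (delta_chain G).

Lemma delta_chain_sub n : delta n \subset G.
Proof.
case: n => [|n] //=; rewrite gen_subG; apply/bigcupsP=> i _.
exact: cfcenter_sub.
Qed.

Lemma commg_delta_chain_normal n : [~: delta n, G] <| G.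
Proof.
rewrite /normal commg_normr andbT.
by rewrite (subset_trans (commSg _ (delta_chain_sub n))) ?commg_subr ?normG.
Qed.

Lemma cfcenter_sub_delta_chain n (i : Iirr G) :
  ~~ ([~: delta n, G] \subset cfker 'chi_i) -> 'Z('chi_i)%CF \subset delta n.+1.
Proof. by move=> notKi; rewrite (subset_trans _ (subset_gen _)) // (bigcup_sup i). Qed.

Lemma delta_chainS n : delta n.+1 \subset delta n.
Proof.
elim: n => [|n IHn]; first exact: delta_chain_sub.
rewrite [delta n.+2]/= gen_subG; apply/bigcupsP=> i notKi.
apply: cfcenter_sub_delta_chain; apply: contra notKi => /(subset_trans _)-> //.
exact: commSg.
Qed.

Lemma delta_chain_leq m n : (m <= n)%N -> delta n \subset delta m.
Proof.
apply: (@homo_leq _ delta (fun A B => B \subset A)) => [A | B A C sBA sCB | k].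
- exact: subxx.
- exact: subset_trans sCB sBA.
- exact: delta_chainS.
Qed.

Lemma cfcenter_delta_chain n (i : Iirr G) :
  [~: delta n, G] \subset cfker 'chi_i -> exists j, 'Z('chi_i)%CF = delta j.
Proof.
elim: n => [|n IHn] Kn.
  exists 0%N; apply/eqP; rewrite eqEsubset cfcenter_sub /=.
  by rewrite sub_cfcenter_irrE.
have [/IHn // | notKn] := boolP ([~: delta n, G] \subset cfker 'chi_i).
exists n.+1; apply/eqP; rewrite eqEsubset cfcenter_sub_delta_chain //.
by rewrite sub_cfcenter_irrE ?delta_chain_sub.
Qed.

Lemma cfcenter_delta_chain_total n (i j : Iirr G) :
    [~: delta n, G] \subset cfker 'chi_i -> [~: delta n, G] \subset cfker 'chi_j ->
  ('Z('chi_i)%CF \subset 'Z('chi_j)%CF) \/ ('Z('chi_j)%CF \subset 'Z('chi_i)%CF).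
Proof.
move=> /cfcenter_delta_chain[a ->] /cfcenter_delta_chain[b ->].
by have [/delta_chain_leq | /ltnW/delta_chain_leq] := leqP a b; [right | left].
Qed.

Lemma nested_quotient_delta_chain n : nested (G / [~: delta n, G])%G.
Proof.
apply: (@nested_quotient _ G (commutator_group (delta n) G)).
  exact: commg_delta_chain_normal.
exact: cfcenter_delta_chain_total.
Qed.

Lemma delta_chain_stable m : delta m.+1 = delta m ->
  forall n, (m <= n)%N -> delta n = delta m.
Proof.
move=> fix_m n /subnKC <-; elim: (n - m)%N => [|k IHk]; first by rewrite addn0.
by rewrite addnS /= IHk.
Qed.

Lemma delta_chain_fixpoint : exists m, delta m.+1 = delta m.
Proof.
suff [m /eqP]: exists m : 'I_#|G|.+1, delta m.+1 == delta m by exists m.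
apply/existsP; apply: contraT => /existsPn noFix.
suff: (#|delta #|G|.+1| + #|G|.+1 <= #|G|)%N by rewrite addnS ltnNge leq_addl.
elim: {-2}#|G|.+1 (leqnn #|G|.+1) => [|n IHn] ltnG.
  by rewrite addn0 subset_leq_card.
rewrite addnS (leq_trans _ (IHn (ltnW ltnG))) // ltn_add2r proper_card //.
by rewrite properEneq delta_chainS (noFix (Ordinal ltnG)).
Qed.

Lemma nested_delta_chain_fixpoint m :
  nested G -> delta m.+1 = delta m -> delta m.+1 = 1.
Proof.
move=> nestedG fix_m.
pose P (i : Iirr G) := ~~ ([~: delta m, G] \subset cfker 'chi_i).
have [i0 Pi0 | noP] := pickP P; last by rewrite /= big_pred0 ?gen0.
have [i Pi sZi] := nested_bigcup_cfcenter nestedG Pi0.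
case/negP: Pi; rewrite (subset_trans _ (commg_cfcenter_irr i)) // commSg //.
by rewrite -fix_m /= gen_subG.
Qed.

End DeltaChain.

Theorem theoremG (gT : finGroupType) (G : {group gT}) :
  (forall n : nat, nested (G / [~: delta_chain G n, G])%G) /\
  (nested G <-> exists n : nat, forall m : nat, (n <= m)%N -> delta_chain G m = 1).
Proof.
split; first exact: nested_quotient_delta_chain.
split=> [nestedG | [n delta_n1] i j].
  have [m fix_m] := delta_chain_fixpoint G.
  exists m => k /(delta_chain_stable fix_m) ->.
  by rewrite -fix_m nested_delta_chain_fixpoint.
by apply: (cfcenter_delta_chain_total (n := n)); rewrite delta_n1 // comm1G sub1G.
Qed.
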